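(* For every integer $k \geq 1$ there is a graph $G$ of tree-width $k$ with $\operatorname{pn}_u(G) \geq \operatorname{pn}_\ell(G) \geq k$.
   Context: All graphs are finite and simple. A linear embedding of a graph $G=(V,E)$ is a pair $(\prec,\mathcal{P})$ where $\prec$ is a total ordering of $V$ and $\mathcal{P}$ is a partition of $E$ into parts called pages. Two edges $uv, xy$ with $u\prec v$, $x \prec y$ cross if $u \prec x \prec v \prec y$ or $x \prec u \prec y \prec v$. A book embedding is a linear embedding in which no two crossing edges lie on the same page. For a book embedding and a vertex $v$, let $\mathcal{P}_v$ be the set of pages containing at least one edge incident to $v$; the embedding is $k$-local if $|\mathcal{P}_v| \le k$ for all $v$, and the local page number $\operatorname{pn}_\ell(G)$ is the smallest $k$ such that $G$ admits a $k$-local book embedding (with any number of pages). For a linear embedding and a page $P$, let $G_P$ be the subgraph consisting of the edges of $P$ and all vertices incident to an edge of $P$. A union embedding is a linear embedding such that for every page $P$ and every connected component $C$ of $G_P$, no two edges of $C$ cross. The union page number $\operatorname{pn}_u(G)$ is the smallest number of pages of a union embedding of $G$. *)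

From mathcomp Require Import all_boot all_fingroup.
Set Implicit Arguments. Unset Strict Implicit. Unset Printing Implicit Defensive.

Definition simple_graph (n : nat) (e : rel 'I_n) : Prop :=
  (forall u v, e u v = e v u) /\ (forall v, ~~ e v v).

Definition IsMin (P : nat -> Prop) (m : nat) : Prop :=
  P m /\ forall q, P q -> m <= q.

(* a (finite, nonempty) tree on 'I_m: simple, connected, with m-1 edges
   (each edge counted twice as ordered pairs) *)
Definition is_tree (m : nat) (tr : rel 'I_m) : Prop :=
  0 < m /\ simple_graph tr /\
  (forall a b, connect tr a b) /\
  #|[set p : 'I_m * 'I_m | tr p.1 p.2]| = (m.-1).*2.

Definition tree_decomposition (n : nat) (e : rel 'I_n)
  (m : nat) (tr : rel 'I_m) (B : 'I_m -> {set 'I_n}) : Prop :=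
  is_tree tr /\
  (forall v, exists t, v \in B t) /\
  (forall u v, e u v -> exists t, (u \in B t) && (v \in B t)) /\
  (forall v t1 t2, v \in B t1 -> v \in B t2 ->
     connect [rel a b | [&& tr a b, v \in B a & v \in B b]] t1 t2).

Definition has_td_of_width (n : nat) (e : rel 'I_n) (w : nat) : Prop :=
  exists (m : nat) (tr : rel 'I_m) (B : 'I_m -> {set 'I_n}),
    tree_decomposition e tr B /\ forall t, #|B t| <= w.+1.

Definition treewidth_is (n : nat) (e : rel 'I_n) (k : nat) : Prop :=
  IsMin (has_td_of_width e) k.

(* A linear embedding: a total order on vertices, given by a bijective
   position map pos (u precedes v iff pos u < pos v), and a partition of
   the edges into pages, given by a page label page u v (nat) of each edge,
   symmetric on edges. *)
Definition linear_embedding (n : nat) (e : rel 'I_n)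
  (pos : {perm 'I_n}) (page : 'I_n -> 'I_n -> nat) : Prop :=
  forall u v, e u v -> page u v = page v u.

(* ordered edges (u,v) and (x,y) with pos u < pos v, pos x < pos y cross:
   u < x < v < y  (the symmetric case is obtained by swapping the edges) *)
Definition crossing_pattern (n : nat) (pos : {perm 'I_n}) (u v x y : 'I_n) :=
  [&& pos u < pos x, pos x < pos v & pos v < pos y].

Definition book_embedding (n : nat) (e : rel 'I_n)
  (pos : {perm 'I_n}) (page : 'I_n -> 'I_n -> nat) : Prop :=
  linear_embedding e pos page /\
  forall u v x y, e u v -> e x y -> page u v = page x y ->
    ~~ crossing_pattern pos u v x y.

Definition pages_at (n : nat) (e : rel 'I_n) (page : 'I_n -> 'I_n -> nat)
  (v : 'I_n) : seq nat :=
  undup [seq page v u | u <- enum 'I_n & e v u].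

Definition has_local_book_embedding (n : nat) (e : rel 'I_n) (k : nat) : Prop :=
  exists pos page, book_embedding e pos page /\
    forall v, size (pages_at e page v) <= k.

Definition local_page_number_is (n : nat) (e : rel 'I_n) (k : nat) : Prop :=
  IsMin (has_local_book_embedding e) k.

Definition union_embedding (n : nat) (e : rel 'I_n)
  (pos : {perm 'I_n}) (page : 'I_n -> 'I_n -> nat) : Prop :=
  linear_embedding e pos page /\
  forall u v x y, e u v -> e x y -> page u v = page x y ->
    connect [rel a b | e a b && (page a b == page u v)] u x ->
    ~~ crossing_pattern pos u v x y.

Definition has_union_embedding (n : nat) (e : rel 'I_n) (s : nat) : Prop :=
  exists pos page, union_embedding e pos page /\
    forall u v, e u v -> page u v < s.

Definition union_page_number_is (n : nat) (e : rel 'I_n) (s : nat) : Prop :=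
  IsMin (has_union_embedding e) s.

(* The witness is the complete split graph: a clique K on k vertices, every
   vertex of which is joined to every vertex of an independent set X of
   N = 2 k^3 + 1 vertices.

   Tree-width: the bags K + {x}, x in X, hung on a star form a decomposition
   of width k; conversely K + {x} is a (k+1)-clique, and by the Helly property
   of subtrees of a tree every clique lies in a single bag.

   Page numbers: in the natural vertex order, putting each edge on the page
   of its endpoint in K gives a book embedding with k pages, which is k-local
   and a union embedding.  Conversely, suppose every vertex sees fewer than
   k pages in a union embedding.  Then every x in X has two neighbours in K
   on a common page, and by pigeonhole three vertices of X share the pair and
   the page.  This K_{2,3} is connected inside its page, so its edges may not
   cross; but in a noncrossing 4-cycle a x b y exactly one of x, y lies
   between a and b, which three vertices cannot all satisfy pairwise.  As a
   book embedding is a union embedding, both page numbers are k. *)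

From mathcomp Require Import all_boot all_fingroup zify.
Set Implicit Arguments. Unset Strict Implicit. Unset Printing Implicit Defensive.

Section Subtrees.
Variables (m : nat) (tr : rel 'I_m).
Hypotheses (trC : symmetric tr) (trI : irreflexive tr).

Definition induced (A : {set 'I_m}) : rel 'I_m :=
  [rel a b | [&& tr a b, a \in A & b \in A]].

Definition arcs (A : {set 'I_m}) : {set 'I_m * 'I_m} :=
  [set p | induced A p.1 p.2].

Definition is_subtree (S : {set 'I_m}) : Prop :=
  {in S &, forall a b, connect (induced S) a b} /\ #|arcs S| = (#|S|.-1).*2.

Definition is_leaf (S : {set 'I_m}) (l t : 'I_m) : Prop :=
  [/\ l \in S, t \in S, tr l t & {in S, forall w, tr l w -> w = t}].

Lemma induced_sym A : symmetric (induced A).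
Proof. by move=> a b; rewrite /induced /= trC [(a \in A) && _]andbC. Qed.

Lemma connect_induced_arc A a b :
  a != b -> connect (induced A) a b -> exists w, induced A a w.
Proof.
move=> ab /connectP [[|w p] /= walk b_last]; first by rewrite b_last eqxx in ab.
by exists w; case/andP: walk.
Qed.

(* A walk through the leaf [l] enters and leaves it through [t], so it can be
   short-cut at [t]. *)
Lemma connect_inducedD1_leaf (A : {set 'I_m}) l t a b :
  {in A, forall w, tr l w -> w = t} -> a != l -> b != l ->
  connect (induced A) a b -> connect (induced (A :\ l)) a b.
Proof.
move=> lt al bl.
pose X := [set y | connect (induced (A :\ l)) a (if y == l then t else y)].
have clX : closed (induced A) X.
  apply: intro_closed; first exact/sym_connect_sym/induced_sym.
  move=> y z /and3P [yz yA zA]; rewrite /X !inE.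
  case: (eqVneq y l) => [yl|ny]; case: (eqVneq z l) => [zl|nz] //.
  - by rewrite (lt z) // -yl.
  - by rewrite (lt y) // -zl trC.
  move=> ay; apply: connect_trans ay (connect1 _).
  by rewrite /induced /= !inE yz ny nz yA zA.
move=> /(closed_connect clX); rewrite /X !inE (negbTE al) (negbTE bl) connect0.
by move <-.
Qed.

Lemma card_arcs_degrees S :
  #|arcs S| = \sum_(a in S) #|[set b in S | tr a b]|.
Proof.
rewrite (eq_bigr (fun a => \sum_(b | (b \in S) && tr a b) 1)); last first.
  by move=> a _; rewrite sum1dep_card.
rewrite pair_big_dep sum1dep_card; apply: eq_card => p; rewrite !inE.
by rewrite /induced /= andbC andbA.
Qed.

(* The degrees in [S] sum to [2 (#|S| - 1)], so some vertex has degree at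
   most one, and connectivity makes it exactly one. *)
Lemma subtree_leaf S : is_subtree S -> 1 < #|S| -> exists l t, is_leaf S l t.
Proof.
move=> [Sc SP] S2.
have [a aS adeg] : exists2 a, a \in S & #|[set b in S | tr a b]| <= 1.
  apply/exists_inP; apply: contraT; rewrite negb_exists_in => /forall_inP H.
  have : \sum_(a in S) 2 <= #|arcs S|.
    by rewrite card_arcs_degrees; apply: leq_sum => a /H; rewrite -ltnNge.
  rewrite sum_nat_const SP; lia.
have [b [bS ab]] : exists b, b \in S /\ a != b.
  have /card_gt1P [x [y [xS yS xy]]] := S2.
  by case: (eqVneq a x) => [->|ax]; [exists y | exists x].
have [w /and3P [aw _ wS]] := connect_induced_arc ab (Sc a b aS bS).
exists a, w; split => // z zS az.
by move/card_le1_eqP: adeg => /(_ w z); apply; rewrite inE ?zS ?wS.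
Qed.

Lemma card_arcsD1_leaf S l t :
  is_leaf S l t -> #|arcs S| = (#|arcs (S :\ l)|).+2.
Proof.
move=> [lS tS lt Ul].
have nlt : l != t by apply: contraTneq lt => ->; rewrite trI.
have arcsS : arcs S = arcs (S :\ l) :|: [set (l, t); (t, l)].
  apply/setP => [[x y]]; rewrite !inE /induced /= !inE !xpair_eqE.
  case: (eqVneq x l) => [->|xl]; case: (eqVneq y l) => [->|yl] /=;
    rewrite ?trI ?andbF ?andbT ?orbF ?lS ?(negbTE nlt) //=.
  - apply/andP/eqP => [[ly yS]|->]; [exact: Ul | by rewrite lt].
  - rewrite andbT trC; apply/andP/eqP => [[lx xS]|->]; [exact: Ul | by rewrite lt].
have disj : [disjoint arcs (S :\ l) & [set (l, t); (t, l)]].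
  apply/pred0P => [[x y]]; rewrite /= !inE /induced /= !inE !xpair_eqE.
  by case: (eqVneq x l); case: (eqVneq y l); rewrite ?andbF.
rewrite arcsS cardsU (disjoint_setI0 disj) cards0 subn0 cards2 xpair_eqE.
by rewrite (negbTE nlt) addn2.
Qed.

Lemma subtreeD1_leaf S l t : is_subtree S -> is_leaf S l t -> is_subtree (S :\ l).
Proof.
move=> [Sc SP] lf; have [lS _ _ Ul] := lf.
split.
  move=> a b; rewrite !inE => /andP [al aS] /andP [bl bS].
  exact: connect_inducedD1_leaf Ul al bl (Sc a b aS bS).
have := card_arcsD1_leaf lf; rewrite SP (cardsD1 l S) lS add1n.
by case: #|S :\ l| => [|a] //= [->].
Qed.

Variables (n : nat) (B : 'I_m -> {set 'I_n}).

Definition connected_bags (S : {set 'I_m}) : Prop :=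
  forall v, {in S &, forall t1 t2, v \in B t1 -> v \in B t2 ->
    connect (induced (S :&: [set t | v \in B t])) t1 t2}.

Lemma connected_bagsD1_leaf S l t :
  connected_bags S -> is_leaf S l t -> connected_bags (S :\ l).
Proof.
move=> SB [lS _ _ Ul] v t1 t2; rewrite !inE.
move=> /andP [t1l t1S] /andP [t2l t2S] v1 v2.
rewrite setIDAC; apply: connect_inducedD1_leaf t1l t2l (SB v t1 t2 t1S t2S v1 v2).
by move=> w /setIP [wS _]; apply: Ul.
Qed.

Lemma leaf_bag_sub_neighbour S l t v t1 :
  connected_bags S -> is_leaf S l t -> t1 \in S -> t1 != l ->
  v \in B l -> v \in B t1 -> v \in B t.
Proof.
move=> SB [lS _ _ Ul] t1S t1l vl v1.
have lt1 : l != t1 by rewrite eq_sym.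
have [w /and3P [lw _ /setIP [wS]]] :=
  connect_induced_arc lt1 (SB v l t1 lS t1S vl v1).
by rewrite inE (Ul w wS lw).
Qed.

(* Helly property of subtrees: induction on [S], removing a leaf [l].  If
   some [c \in C] misses [B l], every [u \in C :&: B l] meets [c] in a bag
   other than [l], so its subtree passes through the neighbour of [l]. *)
Lemma pairwise_covered_in_bag (C : {set 'I_n}) S :
  is_subtree S -> connected_bags S -> S != set0 ->
  {in C &, forall u v, exists2 t, t \in S & (u \in B t) && (v \in B t)} ->
  exists2 t, t \in S & C \subset B t.
Proof.
move Hs : #|S| => s; elim: s S Hs => [|s IH] S Hs ST SB S0 CB.
  by move: S0; rewrite -cards_eq0 Hs.
have [S1|S2] := leqP #|S| 1.
  have /cards1P [t0 St0] : #|S| == 1 by rewrite eqn_leq S1 lt0n cards_eq0.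
  exists t0; first by rewrite St0 set11.
  apply/subsetP => u uC; have [t tS /andP [ut _]] := CB u u uC uC.
  by move: tS ut; rewrite St0 inE => /eqP ->.
have [l [t lf]] := subtree_leaf ST S2; have [lS tS lt _] := lf.
have [|/subsetPn [c cC clB]] := boolP (C \subset B l); first by exists l.
have tDl : t \in S :\ l.
  by rewrite !inE tS andbT; apply: contraTneq lt => ->; rewrite trI.
have [t' t'S Ct'] : exists2 t', t' \in S :\ l & C \subset B t'.
  apply: IH (subtreeD1_leaf ST lf) (connected_bagsD1_leaf SB lf) _ _.
  - by move: Hs; rewrite (cardsD1 l S) lS add1n => -[].
  - by apply/set0Pn; exists t.
  move=> u v uC vC; have [t1 t1S /andP [u1 v1]] := CB u v uC vC.
  have [t1l|t1l] := eqVneq t1 l; last by exists t1; rewrite ?inE ?t1l ?u1 ?v1.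
  have inBt w : w \in C -> w \in B l -> w \in B t.
    move=> wC wl; have [t2 t2S /andP [w2 c2]] := CB w c wC cC.
    apply: leaf_bag_sub_neighbour SB lf t2S _ wl w2.
    by apply: contraNneq clB => <-.
  by exists t => //; rewrite !inBt // -t1l.
by exists t' => //; move: t'S; rewrite inE => /andP [].
Qed.
End Subtrees.

Lemma is_tree_subtreeT m (tr : rel 'I_m) : is_tree tr -> is_subtree tr [set: 'I_m].
Proof.
move=> [_ [_ [conn cnt]]].
have trT : induced tr [set: 'I_m] =2 tr.
  by move=> a b; rewrite /induced /= !inE !andbT.
split; first by move=> a b _ _; rewrite (eq_connect trT).
rewrite cardsT card_ord -cnt; apply: eq_card => p; rewrite !inE.
exact: trT.
Qed.

Lemma tree_decomposition_clique_in_bag n (e : rel 'I_n) m (tr : rel 'I_m) B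
    (C : {set 'I_n}) :
  tree_decomposition e tr B -> {in C &, forall u v, u != v -> e u v} ->
  exists t, C \subset B t.
Proof.
move=> [trT [cov [ecov sub]]] Ccl; have [m0 [[trC trI] _]] := trT.
have [|||t _ Ct] := @pairwise_covered_in_bag _ tr trC (fun a => negbTE (trI a))
    _ B C [set: 'I_m] (is_tree_subtreeT trT).
- move=> v t1 t2 _ _ v1 v2.
  have vT : induced tr ([set: 'I_m] :&: [set t | v \in B t]) =2
            [rel a b | [&& tr a b, v \in B a & v \in B b]].
    by move=> a b; rewrite /induced /= !inE.
  by rewrite (eq_connect vT); apply: sub.
- by apply/set0Pn; exists (Ordinal m0).
- move=> u v uC vC; have [<-|uv] := eqVneq u v.
    by have [t ut] := cov u; exists t; rewrite ?inE ?ut.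
  by have [t uvt] := ecov u v (Ccl u v uC vC uv); exists t.
by exists t.
Qed.

Lemma clique_card_le_width n (e : rel 'I_n) w (C : {set 'I_n}) :
  has_td_of_width e w -> {in C &, forall u v, u != v -> e u v} -> #|C| <= w.+1.
Proof.
move=> [m [tr [B [td Bw]]]] Ccl.
have [t Ct] := tree_decomposition_clique_in_bag td Ccl.
exact: leq_trans (subset_leq_card Ct) (Bw t).
Qed.

Definition star (s : nat) : rel 'I_s.+1 :=
  [rel a b | (a != b) && ((a == ord0) || (b == ord0))].
Arguments star : clear implicits.

Lemma connect_star s a b : connect (star s) a b.
Proof.
apply: (connect_trans (y := ord0)).
  have [->|a0] := eqVneq a ord0; first exact: connect0.
  by apply: connect1; rewrite /star /= a0 eqxx orbT.
have [->|b0] := eqVneq b ord0; first exact: connect0.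
by apply: connect1; rewrite /star /= eq_sym b0.
Qed.

Lemma star_is_tree s : is_tree (star s).
Proof.
split=> //; split; first by split=> [a b|a]; rewrite /star /= ?eqxx // eq_sym orbC.
split; first exact: connect_star.
have -> : [set p : 'I_s.+1 * 'I_s.+1 | star s p.1 p.2] =
    setX [set ord0] [set~ ord0] :|: setX [set~ ord0] [set ord0].
  apply/setP => [[a b]]; rewrite !inE /star /=.
  have [<-|ab] := eqVneq a b; first by case: (a == ord0).
  have [a0|] := eqVneq a ord0; have [b0|] := eqVneq b ord0 => //.
  by move: ab; rewrite a0 b0 eqxx.
rewrite cardsU (_ : _ :&: _ = set0); last first.
  by apply/setP => [[a b]]; rewrite !inE /=; case: (a == ord0); case: (b == ord0).
by rewrite cards0 subn0 !cardsX cards1 cardsC1 card_ord mul1n muln1 addnn.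
Qed.

Section OnePage.
Variables (T : eqType) (pos : T -> nat) (E : rel T).
Hypotheses (posI : injective pos) (Esym : symmetric E) (Eirr : irreflexive E).
Hypothesis E_noncrossing : forall u v x y, E u v -> E x y ->
  ~~ [&& pos u < pos x, pos x < pos v & pos v < pos y].

Lemma noncrossing_C4_sides lo hi x y :
  x != y -> pos lo < pos hi -> E lo x -> E x hi -> E lo y -> E y hi ->
  (pos lo < pos x < pos hi) != (pos lo < pos y < pos hi).
Proof.
move=> xy lh lx xh ly yh.
have neqE u v : E u v -> pos u != pos v.
  by rewrite (inj_eq posI); apply: contraTneq => ->; rewrite Eirr.
have xl : E x lo by rewrite Esym.
have yl : E y lo by rewrite Esym.
have hx : E hi x by rewrite Esym.
have hy : E hi y by rewrite Esym.
have : pos x != pos y by rewrite (inj_eq posI).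
move: (neqE _ _ lx) (neqE _ _ xh) (neqE _ _ ly) (neqE _ _ yh).
(* Were [x] and [y] on the same side of [lo] and [hi], one of these eight
   pairs of edges would cross. *)
move: (E_noncrossing ly xh) (E_noncrossing lx yh) (E_noncrossing xl yh).
move: (E_noncrossing yl xh) (E_noncrossing lx hy) (E_noncrossing ly hx).
move: (E_noncrossing xh ly) (E_noncrossing yh lx).
lia.
Qed.

Lemma noncrossing_K23_free a b x1 x2 x3 :
  a != b -> uniq [:: x1; x2; x3] ->
  ~ (forall x, x \in [:: x1; x2; x3] -> E a x && E b x).
Proof.
wlog lt_ab : a b / pos a < pos b.
  move=> W ab; have : pos a != pos b by rewrite (inj_eq posI).
  case: ltngtP => // [lt_ab|lt_ba] _; first exact: W.
  move=> U K; apply: (W b a) => //; first by rewrite eq_sym.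
  by move=> x /K; rewrite andbC.
move=> _ U K.
have sides x y : x \in [:: x1; x2; x3] -> y \in [:: x1; x2; x3] -> x != y ->
    (pos a < pos x < pos b) != (pos a < pos y < pos b).
  move=> xX yX xy; have /andP [ax bx] := K x xX; have /andP [ay b_y] := K y yX.
  by apply: noncrossing_C4_sides; rewrite // Esym.
move: U; rewrite /= !inE !negb_or andbT => /andP [/andP [x12 x13] x23].
have m1 : x1 \in [:: x1; x2; x3] by rewrite !inE eqxx.
have m2 : x2 \in [:: x1; x2; x3] by rewrite !inE eqxx orbT.
have m3 : x3 \in [:: x1; x2; x3] by rewrite !inE eqxx !orbT.
move: (sides _ _ m1 m2 x12) (sides _ _ m1 m3 x13) (sides _ _ m2 m3 x23).
by case: (_ && _); case: (_ && _); case: (_ && _).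
Qed.
End OnePage.

Lemma book_union_embedding n (e : rel 'I_n) pos page :
  book_embedding e pos page -> union_embedding e pos page.
Proof. by move=> [lin bk]; split=> // u v x y uv xy p _; apply: bk. Qed.

Section PageComponents.
Variables (n : nat) (e : rel 'I_n) (page : 'I_n -> 'I_n -> nat).

Lemma mem_pages_at u v : e u v -> page u v \in pages_at e page u.
Proof.
move=> uv; rewrite mem_undup; apply/mapP; exists v => //.
by rewrite mem_filter uv mem_enum.
Qed.

Lemma size_pages_at_le q v :
  (forall u w, e u w -> page u w < q) -> size (pages_at e page v) <= q.
Proof.
move=> lt_q; rewrite -(size_iota 0 q).
apply: uniq_leq_size; first exact: undup_uniq.
move=> p; rewrite mem_undup => /mapP [u]; rewrite mem_filter => /andP [vu _] ->.
by rewrite mem_iota lt_q.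
Qed.

Definition page_edge (p : nat) : rel 'I_n := [rel u v | e u v && (page u v == p)].

Definition page_component (p : nat) (r : 'I_n) : rel 'I_n :=
  [rel u v | page_edge p u v && connect (page_edge p) r u].

Hypothesis eC : symmetric e.

Lemma page_edge_sym pos p : linear_embedding e pos page -> symmetric (page_edge p).
Proof.
move=> lin u v; rewrite /page_edge /= eC.
by case vu: (e v u); rewrite //= lin // eC.
Qed.

Lemma page_component_sym pos p r :
  linear_embedding e pos page -> symmetric (page_component p r).
Proof.
move=> lin; have pC := page_edge_sym p lin.
suff imp u v : page_component p r u v -> page_component p r v u.
  by move=> u v; apply/idP/idP; apply: imp.
move=> /andP [uv ru]; rewrite /page_component /= -pC uv.
exact: connect_trans ru (connect1 uv).
Qed.

Lemma union_page_component_noncrossing pos p r u v x y :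
  union_embedding e pos page ->
  page_component p r u v -> page_component p r x y ->
  ~~ crossing_pattern pos u v x y.
Proof.
move=> [lin un] /andP [/andP [uv /eqP puv] ru] /andP [/andP [xy /eqP pxy] rx].
apply: un => //; first by rewrite puv pxy.
rewrite puv; apply: connect_trans rx.
by rewrite (sym_connect_sym (page_edge_sym p lin)).
Qed.
End PageComponents.

Lemma pigeonhole_seq (T : finType) (A : eqType) (f : T -> A) (s : seq A) :
  (forall x, f x \in s) -> size s < #|T| -> exists x y, x != y /\ f x = f y.
Proof.
move=> fs sT.
case: (boolP (injectiveb f)) => [/injectiveP finj|/injectivePn [x [y xy fxy]]].
  have : size (map f (enum T)) <= size s.
    apply: uniq_leq_size; first by rewrite map_inj_uniq ?enum_uniq.
    by move=> _ /mapP [x _ ->].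
  by rewrite size_map -cardT leqNgt sT.
by exists x, y.
Qed.

Lemma pigeonhole_fiber3 (A B : finType) (f : A -> B) :
  2 * #|B| < #|A| -> exists b, 2 < #|[set a | f a == b]|.
Proof.
move=> H; apply/existsP; apply: contraLR H; rewrite negb_exists => /forallP Hf.
rewrite -leqNgt -sum1_card (partition_big f xpredT) //= mulnC -sum_nat_const.
by apply: leq_sum => b _; rewrite sum1dep_card leqNgt.
Qed.

Section CompleteSplitGraph.
Variable k' : nat.
Local Notation k := k'.+1.

Definition N := (2 * k ^ 3).+1.
Local Notation n := (k + N).

(* The clique is [K = {0, ..., k-1}], the independent set is
   [X = {k, ..., k + N - 1}]; [kv] and [xv] enumerate them. *)
Definition complete_split : rel 'I_n :=
  [rel u v : 'I_n | (u != v) && ((u < k) || (v < k))].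
Local Notation G := complete_split.

Definition kv (i : 'I_k) : 'I_n := lshift N i.
Definition xv (j : 'I_N) : 'I_n := rshift k j.

Lemma complete_split_simple : simple_graph G.
Proof. by split=> [u v|v]; rewrite /G /= ?eqxx // eq_sym orbC. Qed.

Lemma complete_split_kv_xv i j : G (kv i) (xv j).
Proof.
by rewrite /G /= ltn_ord andbT -val_eqE /= neq_ltn ltn_addr ?ltn_ord.
Qed.

Lemma complete_split_xv_kv i j : G (xv j) (kv i).
Proof. by rewrite (proj1 complete_split_simple) complete_split_kv_xv. Qed.

Lemma mem_kv_imset v : (v \in [set kv i | i in 'I_k]) = (v < k).
Proof.
apply/imsetP/idP => [[i _ ->]|vk]; first exact: (ltn_ord i).
by exists (Ordinal vk) => //; apply: val_inj.
Qed.

Lemma xv_of_ge (v : 'I_n) : k <= v -> exists j, v = xv j.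
Proof.
move=> kv_le; have vN : v - k < N by have := ltn_ord v; lia.
by exists (Ordinal vN); apply: val_inj => /=; lia.
Qed.

Definition min_page (u v : 'I_n) : nat := minn u v.

Lemma min_page_lt u v : G u v -> min_page u v < k.
Proof. by rewrite /G /min_page /= => /andP [_ ukv]; lia. Qed.

(* With the natural vertex order, page [i] is the star of [kv i] towards
   larger vertices, and two edges of a star never cross. *)
Lemma min_page_book : book_embedding G 1%g min_page.
Proof.
split=> [u v _|u v x y _ _]; first by rewrite /min_page minnC.
by rewrite /crossing_pattern !perm1 /min_page; lia.
Qed.

Lemma complete_split_local_book : has_local_book_embedding G k.
Proof.
exists 1%g, min_page; split; first exact: min_page_book.
by move=> v; apply: size_pages_at_le; apply: min_page_lt.
Qed.

Lemma complete_split_union : has_union_embedding G k.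
Proof.
exists 1%g, min_page; split; last exact: min_page_lt.
exact/book_union_embedding/min_page_book.
Qed.

(* If every vertex sees fewer than [k] pages, each [xv j] has two clique
   neighbours [i], [i'] on a common page; the triple of [i], [i'] and the rank
   of that page among the pages of [kv i] takes [k ^ 3] values on
   [N > 2 k ^ 3] vertices. *)
Lemma complete_split_monochromatic_K23 page :
  (forall u v, G u v -> page u v = page v u) ->
  (forall v, size (pages_at G page v) < k) ->
  exists (i i' : 'I_k) (j1 j2 j3 : 'I_N) p,
    [/\ i != i', uniq [:: j1; j2; j3] & forall j, j \in [:: j1; j2; j3] ->
      page (kv i) (xv j) = p /\ page (kv i') (xv j) = p].
Proof.
move=> psym small.
pose rank i j := index (page (kv i) (xv j)) (pages_at G page (kv i)).
have rank_lt i j : rank i j < k.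
  by apply: leq_trans (small (kv i)); rewrite ltnS index_size.
pose R j (c : 'I_k * 'I_k * 'I_k) := [&& c.1.1 != c.1.2,
  page (kv c.1.1) (xv j) == page (kv c.1.2) (xv j) & rank c.1.1 j == c.2].
have R_ex j : exists c, R j c.
  have [||i [i' [ii' pii']]] :=
    @pigeonhole_seq _ _ (fun i => page (xv j) (kv i)) (pages_at G page (xv j)).
  - by move=> i; rewrite mem_pages_at ?complete_split_xv_kv.
  - by rewrite card_ord small.
  exists (i, i', Ordinal (rank_lt i j)).
  rewrite /R /= ii' (psym _ _ (complete_split_kv_xv i j)).
  by rewrite (psym _ _ (complete_split_kv_xv i' j)) pii' !eqxx.
pose f j := odflt (ord0, ord0, ord0) [pick c | R j c].
have Rf j : R j (f j).
  by rewrite /f; case: pickP => [//|none]; have [c] := R_ex j; rewrite none.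
have [|[[i i'] c]] := pigeonhole_fiber3 f.
  by rewrite !card_prod !card_ord /N ltnS -mulnA !expnS expn0 muln1.
move=> /card_gt2P [j1 [j2 [j3 [[f1 f2 f3] [j12 j23 j31]]]]].
exists i, i', j1, j2, j3, (nth 0 (pages_at G page (kv i)) c); split.
- by have := Rf j1; rewrite inE in f1; rewrite (eqP f1) => /andP [].
- by rewrite /= !inE negb_or j12 eq_sym j31 j23.
move=> j jJ; have fj : f j = (i, i', c).
  by apply/eqP; move: jJ; rewrite !inE in f1 f2 f3 * => /or3P [] /eqP ->.
have := Rf j; rewrite fj => /and3P [_ /eqP <- /eqP <-].
by rewrite nth_index // mem_pages_at ?complete_split_kv_xv.
Qed.

Lemma complete_split_union_pages_at pos page :
  union_embedding G pos page -> exists v, k <= size (pages_at G page v).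
Proof.
move=> un; have [lin _] := un; have [eC eI] := complete_split_simple.
apply/existsP; apply: contraT => /existsPn small; exfalso.
have [|i [i' [j1 [j2 [j3 [p [ii' uJ mono]]]]]]] :=
  complete_split_monochromatic_K23 lin.
  by move=> v; rewrite ltnS leqNgt small.
pose pe := page_edge G page p; pose pc := page_component G page p (kv i).
have pe_kv_xv (l : 'I_k) j : page (kv l) (xv j) = p -> pe (kv l) (xv j).
  by move=> pl; rewrite /pe /page_edge /= complete_split_kv_xv pl eqxx.
have j1J : j1 \in [:: j1; j2; j3] by rewrite !inE eqxx.
have ii'_conn : connect pe (kv i) (kv i').
  apply: (connect_trans (connect1 (pe_kv_xv _ _ (mono j1 j1J).1))).
  apply: connect1; rewrite /pe (page_edge_sym eC _ lin).
  by apply: pe_kv_xv; case: (mono j1 j1J).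
have pc_kv_xv j :
    j \in [:: j1; j2; j3] -> pc (kv i) (xv j) && pc (kv i') (xv j).
  by move=> /mono [pi pi']; rewrite /pc /page_component /= -/pe !pe_kv_xv ?connect0.
apply: (@noncrossing_K23_free _ (fun v => pos v) pc _ _ _ _
          (kv i) (kv i') (xv j1) (xv j2) (xv j3)).
- by move=> x y /val_inj /perm_inj.
- exact: (page_component_sym eC p (kv i) lin).
- by move=> v; rewrite /pc /page_component /page_edge /= (negbTE (eI v)).
- by move=> u v x y; apply: (union_page_component_noncrossing (r := kv i) eC un).
- by rewrite (inj_eq (@lshift_inj _ _)).
- by move: uJ; rewrite -(map_inj_uniq (@rshift_inj k N)).
move=> x; rewrite !inE => /or3P [] /eqP ->; apply: pc_kv_xv.
all: by rewrite !inE eqxx ?orbT.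
Qed.

Lemma complete_split_local_lb q : has_local_book_embedding G q -> k <= q.
Proof.
move=> [pos [page [bk small]]].
have [v kv_le] := complete_split_union_pages_at (book_union_embedding bk).
exact: leq_trans kv_le (small v).
Qed.

Lemma complete_split_union_lb q : has_union_embedding G q -> k <= q.
Proof.
move=> [pos [page [un lt_q]]]; have [v kv_le] := complete_split_union_pages_at un.
exact: leq_trans kv_le (size_pages_at_le v lt_q).
Qed.

Definition split_bag (j : 'I_N) : {set 'I_n} := xv j |: [set kv i | i in 'I_k].

Lemma complete_split_tree_decomposition :
  tree_decomposition G (star (2 * k ^ 3)) split_bag.
Proof.
have in_bag (v : 'I_n) j : v < k -> v \in split_bag j.
  by rewrite !inE mem_kv_imset orbC => ->.
split; first exact: star_is_tree.
split; last split.
- move=> v; have [vk|/xv_of_ge [j ->]] := ltnP v k.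
    by exists ord0; apply: in_bag.
  by exists j; rewrite !inE eqxx.
- move=> u v; wlog uk : u v / u < k.
    move=> W uv; have /andP [_ /orP [uk|vk]] := uv; first exact: W.
    have [|t /andP [vt ut]] := W v u vk.
      by rewrite (proj1 complete_split_simple).
    by exists t; rewrite ut vt.
  move=> _; have [vk|/xv_of_ge [j ->]] := ltnP v k.
    by exists ord0; rewrite !in_bag.
  by exists j; rewrite in_bag // !inE eqxx.
move=> v t1 t2; have [vk _ _|/xv_of_ge [j ->]] := ltnP v k.
  rewrite (@eq_connect _ _ (star _)) ?connect_star // => a b /=.
  by rewrite !in_bag // !andbT.
rewrite !inE mem_kv_imset /= ltnNge leq_addr !orbF.
by move=> /eqP/rshift_inj <- /eqP/rshift_inj <-; apply: connect0.
Qed.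

Lemma complete_split_td_width : has_td_of_width G k.
Proof.
exists _, (star _), split_bag; split.
  exact: complete_split_tree_decomposition.
move=> j; rewrite cardsU1; apply: (leq_add (leq_b1 _)).
by apply: leq_trans (leq_imset_card _ _) _; rewrite card_ord.
Qed.

(* [K] together with one vertex of [X] is a [(k+1)]-clique. *)
Lemma complete_split_width_lb w : has_td_of_width G w -> k <= w.
Proof.
move=> td; have := clique_card_le_width (C := split_bag ord0) td.
rewrite cardsU1 mem_kv_imset /= ltnNge leq_addr card_imset ?card_ord;
  last exact: lshift_inj.
apply=> u v uC vC uv; rewrite /G /= uv.
move: uC vC uv; rewrite !inE !mem_kv_imset.
by case/orP=> [/eqP ->|->] //; case/orP=> [/eqP ->|->]; rewrite ?eqxx ?orbT.
Qed.
End CompleteSplitGraph.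

Theorem theorem3 (k : nat) (hk : 1 <= k) :
  exists (n : nat) (e : rel 'I_n),
    simple_graph e /\ treewidth_is e k /\
    exists pl pu : nat,
      local_page_number_is e pl /\ union_page_number_is e pu /\
      pl <= pu /\ k <= pl.
Proof.
case: k hk => // k _.
exists _, (@complete_split k); split; first exact: complete_split_simple.
split.
  by split; [exact: complete_split_td_width | exact: complete_split_width_lb].
exists k.+1, k.+1; split.
  by split; [exact: complete_split_local_book | exact: complete_split_local_lb].
split; last by [].
by split; [exact: complete_split_union | exact: complete_split_union_lb].
Qed.
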